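(* Let $(S,\cdot)$ be a discrete semigroup, let $\mathcal{F}$ be a filter on $S$ such that $\overline{\mathcal{F}}$ is a subsemigroup of $\beta S$, let $(X,\langle T_s\rangle_{s\in S})$ be a dynamical system, and let $x\in X$. Then for each $F\in\mathcal{F}$ there is an $\mathcal{F}$-uniformly recurrent point $y\in\overline{\{T_s(x): s\in F\}}$ such that $x$ and $y$ are $\mathcal{F}$-proximal.
   Context: $\beta S$ is the Stone–Čech compactification of $S$ with its right topological semigroup structure; $\overline{\mathcal{F}}=\bigcap_{F\in\mathcal{F}}\overline{F}$ is the set of ultrafilters containing $\mathcal{F}$. A dynamical system $(X,\langle T_s\rangle_{s\in S})$: $X$ compact Hausdorff, each $T_s$ continuous, $T_s\circ T_t=T_{st}$. A set $A\subseteq S$ is $\mathcal{F}$-syndetic if for every $F\in\mathcal{F}$ there is a finite $G\subseteq F$ with $\bigcup_{t\in G}t^{-1}A\in\mathcal{F}$. A point $y$ is $\mathcal{F}$-uniformly recurrent if for every neighbourhood $U$ of $y$, $\{s\in S:T_s(y)\in U\}$ is $\mathcal{F}$-syndetic. Points $x,y$ are $\mathcal{F}$-proximal if for every neighbourhood $U$ of the diagonal in $X\times X$ and every $F\in\mathcal{F}$ there is $s\in F$ with $(T_s(x),T_s(y))\in U$. *)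

From mathcomp Require Import all_boot all_order.
From mathcomp Require Import all_classical topology.
Set Implicit Arguments. Unset Strict Implicit. Unset Printing Implicit Defensive.
Local Open Scope classical_set_scope.

Section Defs.
Variable S : Type.
Variable mul : S -> S -> S.

Definition linv (t : S) (A : set S) : set S := [set s | A (mul t s)].

Definition is_filter (F : set (set S)) : Prop :=
  [/\ F setT, ~ F set0,
      (forall A B, F A -> F B -> F (A `&` B)) &
      (forall A B, A `<=` B -> F A -> F B)].

(* points of beta S = ultrafilters on S *)
Definition is_ultrafilter (p : set (set S)) : Prop :=
  is_filter p /\ (forall A, p A \/ p (~` A)).

(* the semigroup operation of beta S (Hindman--Strauss convention):
   A \in p . q  iff  {s | s^{-1}A \in q} \in p *)
Definition bS_mul (p q : set (set S)) : set (set S) :=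
  [set A | p [set s | q (linv s A)]].

(* closure of F in beta S: ultrafilters containing F *)
Definition Fbar (F : set (set S)) : set (set (set S)) :=
  [set p | is_ultrafilter p /\ F `<=` p].

Definition Fbar_subsemigroup (F : set (set S)) : Prop :=
  (exists p, Fbar F p) /\
  (forall p q, Fbar F p -> Fbar F q -> Fbar F (bS_mul p q)).

Definition F_syndetic (F : set (set S)) (A : set S) : Prop :=
  forall B, F B -> exists G : set S,
    [/\ finite_set G, G `<=` B & F (\bigcup_(t in G) linv t A)].
End Defs.

Section Dyn.
Context {S : Type} (mul : S -> S -> S) {X : topologicalType}.
Variable T : S -> X -> X.

Definition F_unif_recurrent (F : set (set S)) (y : X) : Prop :=
  forall U, nbhs y U -> F_syndetic mul F [set s | U (T s y)].

Definition diag_nbhs (U : set (X * X)) : Prop :=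
  exists O : set (X * X), [/\ open O, (forall z, O (z, z)) & O `<=` U].

Definition F_proximal (F : set (set S)) (x y : X) : Prop :=
  forall U, diag_nbhs U -> forall B, F B -> exists2 s, B s & U (T s x, T s y).
End Dyn.

(* The closed subsets of beta S are the sets [Fbar G] of ultrafilters containing
   a filter [G], ordered by reverse inclusion of filters, and [Fbar G] multiplied
   on the right by an ultrafilter [p] is again closed: it is [Fbar (filter_mul G p)].
   Zorn's lemma on filters therefore produces a minimal closed left ideal of
   [Fbar F] and, inside it, a minimal closed subsemigroup, every point of which is
   idempotent (Ellis-Numakura). This gives an idempotent [u] in [Fbar F] with
   [u = r (q u)] for some [r] in [Fbar F], for every [q] in [Fbar F].
   Put [y = u-lim T_s x]. Then [y] lies in the orbit closure of [x] over [B],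
   [u-lim T_s y = y], so [x] and [y] are [F]-proximal. If a return-time set of [y]
   were not [F]-syndetic, some [q] in [Fbar F] would contain none of its
   translates, against [(r q)-lim T_s y = (r q u)-lim T_s y = y]. *)

From mathcomp Require Import all_boot all_order.
From mathcomp Require Import all_classical topology.
Local Open Scope classical_set_scope.
Set Implicit Arguments. Unset Strict Implicit. Unset Printing Implicit Defensive.

Lemma Zorn_bigcup_nonempty T (P : set (set T)) : P !=set0 ->
  (forall C, C !=set0 -> C `<=` P -> total_on C subset -> P (\bigcup_(A in C) A)) ->
  exists2 A, P A & forall B, P B -> A `<=` B -> B = A.
Proof.
move=> [A0 PA0] Pchain.
(* [Zorn_bigcup] also needs the empty chain, whose union is [set0]. *)
have [|A [[PA|A0E] Amax]] := @Zorn_bigcup _ (P `|` [set set0]).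
- move=> C CP Ctot; have [[A [CA PA]]|CnP] := pselect (exists A, C A /\ P A).
    left; rewrite (_ : \bigcup_(B in C) B = \bigcup_(B in C `&` P) B).
      by apply: Pchain; [exists A | move=> ? [] | move=> ? ? [? _] [? _]; apply: Ctot].
    apply/seteqP; split=> x [B CB Bx]; last by exists B => //; case: CB.
    by exists B => //; split=> //; case: (CP B CB) => // /= B0; rewrite B0 in Bx.
  right; apply/seteqP; split=> // x [B CB Bx].
  case: (CP B CB) => [PB|/= B0]; first by case: CnP; exists B.
  by rewrite B0 in Bx.
- exists A => // B PB AB; apply/seteqP; split=> //.
  by apply: contrapT => BA; apply: (Amax B); [split|left].
- rewrite /= {}A0E in Amax.
  have P0 B : P B -> B = set0.
    move=> PB; apply: contrapT => /eqP /set0P [x Bx].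
    by apply: (Amax B); [split=> // /(_ x Bx)|left].
  by exists A0 => // B PB _; rewrite (P0 _ PB) (P0 _ PA0).
Qed.

Section Filters.
Variable S : Type.
Implicit Types (G H : set (set S)) (p q r : set (set S)) (A B E : set S).

Lemma is_filterT G : is_filter G -> G setT. Proof. by case. Qed.

Lemma is_filterI G A B : is_filter G -> G A -> G B -> G (A `&` B).
Proof. by case=> _ _ + _; apply. Qed.

Lemma is_filterS G A B : is_filter G -> A `<=` B -> G A -> G B.
Proof. by case=> _ _ _; apply. Qed.

Lemma is_filter_ex G A : is_filter G -> G A -> A !=set0.
Proof. by case=> _ G0 _ _ GA; apply/set0P/eqP => A0; rewrite A0 in GA. Qed.

Lemma is_filter_proper G : is_filter G -> ProperFilter G.
Proof. by case=> GT G0 GI GS; do 2?split. Qed.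

Lemma ultra_is_ultrafilter p : UltraFilter p -> is_ultrafilter p.
Proof.
move=> pU; split=> [|A]; last exact: in_ultra_setVsetC.
by split=> [||A B|A B]; [exact: filterT|exact: filter_not_empty|exact: filterI|exact: filterS].
Qed.

Lemma ultra_setC p A : is_ultrafilter p -> p (~` A) <-> ~ p A.
Proof.
move=> [pF pAC]; split; last by move=> npA; case: (pAC A) => // /npA.
by move=> pCA pA; have [x []] := is_filter_ex pF (is_filterI pF pA pCA).
Qed.

Lemma ultra_max p q : is_ultrafilter p -> is_filter q -> p `<=` q -> q = p.
Proof.
move=> pU qF pq; apply/seteqP; split=> // A qA; apply: contrapT => /(ultra_setC _ pU).
by move=> /pq qCA; have [x []] := is_filter_ex qF (is_filterI qF qA qCA).
Qed.

Lemma Fbar_ex G : is_filter G -> exists p, Fbar G p.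
Proof.
move=> /is_filter_proper GF; have [p [pU Gp]] := ultraFilterLemma GF.
by exists p; split=> //; exact: ultra_is_ultrafilter.
Qed.

Definition down_directed (Bs : set (set S)) :=
  forall B1 B2, Bs B1 -> Bs B2 -> exists2 B3, Bs B3 & B3 `<=` B1 `&` B2.

Definition filter_gen G (Bs : set (set S)) : set (set S) :=
  [set D | exists E B, [/\ G E, Bs B & E `&` B `<=` D]].

Lemma filter_gen_filter G Bs : is_filter G -> Bs !=set0 -> down_directed Bs ->
  (forall E B, G E -> Bs B -> E `&` B !=set0) -> is_filter (filter_gen G Bs).
Proof.
move=> GF [B0 BsB0] Bsdir GBs; split.
- by exists setT, B0; split=> //; exact: is_filterT.
- by move=> [E [B [GE BsB EB0]]]; have [x /EB0] := GBs _ _ GE BsB.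
- move=> D1 D2 [E1 [B1 [GE1 BsB1 sD1]]] [E2 [B2 [GE2 BsB2 sD2]]].
  have [B3 BsB3 sB3] := Bsdir _ _ BsB1 BsB2.
  exists (E1 `&` E2), B3; split=> //; first exact: is_filterI.
  by move=> x [[E1x E2x] /sB3 [B1x B2x]]; split; [apply: sD1|apply: sD2].
- move=> D1 D2 sD [E [B [GE BsB sD1]]].
  by exists E, B; split=> //; apply: subset_trans sD.
Qed.

Lemma Fbar_filter_gen G Bs r : is_filter G -> Bs !=set0 ->
  Fbar (filter_gen G Bs) r <-> Fbar G r /\ Bs `<=` r.
Proof.
move=> GF [B0 BsB0]; split=> [|[]]; rewrite /Fbar /= => -[rU].
  move=> genr; split.
    by split=> // E GE; apply: genr; exists E, B0; split=> // ? [].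
  move=> B BsB; apply: genr; exists setT, B.
  by split; [exact: is_filterT|by []|move=> ? []].
move=> Gr Bsr; split=> // D [E [B [GE BsB sD]]].
exact: is_filterS rU.1 sD (is_filterI rU.1 (Gr _ GE) (Bsr _ BsB)).
Qed.

Lemma Fbar_gen_ex G Bs : is_filter G -> Bs !=set0 -> down_directed Bs ->
  (forall E B, G E -> Bs B -> E `&` B !=set0) -> exists r, Fbar G r /\ Bs `<=` r.
Proof.
move=> GF Bs0 Bsdir GBs; have [r genr] := Fbar_ex (filter_gen_filter GF Bs0 Bsdir GBs).
by exists r; apply/Fbar_filter_gen.
Qed.

Lemma Fbar_subsetP G H : is_filter G -> (Fbar G `<=` Fbar H <-> H `<=` G).
Proof.
move=> GF; split=> [GH B HB|HG p [pU Gp]]; last by split=> //; apply: subset_trans Gp.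
apply: contrapT => GnB.
have [|||r [Gr /(_ (~` B) erefl) rCB]] := @Fbar_gen_ex G [set ~` B] GF.
- by exists (~` B).
- by move=> _ _ -> ->; exists (~` B).
- move=> E _ GE ->; apply/set0P/eqP => /disjoints_subset; rewrite setCK => EB.
  exact/GnB/(is_filterS GF EB).
have [rU Hr] := GH _ Gr.
by move/(ultra_setC _ rU): rCB; apply; apply: Hr.
Qed.

Lemma bigcup_filter (C : set (set (set S))) : C !=set0 -> C `<=` @is_filter S ->
  total_on C subset -> is_filter (\bigcup_(H in C) H).
Proof.
move=> [H0 CH0] CF Ctot; split.
- by exists H0 => //; exact: is_filterT (CF _ CH0).
- by move=> [H CH]; case: (CF _ CH) => _ + _ _; apply.
- move=> A B [H1 CH1 H1A] [H2 CH2 H2B].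
  have [H12|H21] := Ctot _ _ CH1 CH2.
    by exists H2 => //; apply: is_filterI (CF _ CH2) (H12 _ H1A) H2B.
  by exists H1 => //; apply: is_filterI (CF _ CH1) H1A (H21 _ H2B).
- move=> A B AB [H CH HA]; exists H => //; exact: is_filterS (CF _ CH) AB HA.
Qed.

Lemma Fbar_bigcup (C : set (set (set S))) p : C !=set0 ->
  Fbar (\bigcup_(H in C) H) p <-> forall H, C H -> Fbar H p.
Proof.
move=> [H0 CH0]; split=> [[pU Cp] H CH|Cp]; first by split=> // A HA; apply: Cp; exists H.
by split; [exact: (Cp _ CH0).1|move=> A [H CH HA]; exact: (Cp _ CH).2].
Qed.

Definition minimal_Fbar (Q : set (set S) -> Prop) H :=
  [/\ is_filter H, Q H &
      forall H', is_filter H' -> Q H' -> Fbar H' `<=` Fbar H -> Fbar H `<=` Fbar H'].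

Lemma minimal_Fbar_ex (Q : set (set S) -> Prop) G :
  (forall C, C !=set0 -> C `<=` @is_filter S `&` Q -> total_on C subset ->
     Q (\bigcup_(H in C) H)) ->
  is_filter G -> Q G -> exists2 H, Fbar H `<=` Fbar G & minimal_Fbar Q H.
Proof.
move=> Qchain GF QG.
have [|C C0 CP Ctot|H [HF GH QH] Hmax] :=
  @Zorn_bigcup_nonempty _ [set H | [/\ is_filter H, G `<=` H & Q H]].
- by exists G; split.
- have CF : C `<=` @is_filter S by move=> H /CP [].
  split; [exact: bigcup_filter|move=> A GA|].
    by case: C0 => H CH; exists H => //; have [_ + _] := CP _ CH; apply.
  by apply: Qchain => // H /CP [].
exists H; first exact/Fbar_subsetP.
split=> // H' H'F QH' /(Fbar_subsetP _ H'F) HH'.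
by rewrite (Hmax H') //; split=> //; apply: subset_trans HH'.
Qed.
End Filters.

Section StoneCech.
Variables (S : Type) (mul : S -> S -> S).
Implicit Types (F G H : set (set S)) (p q r u : set (set S)) (A B E : set S).
Implicit Types (K L : set (set (set S))).
Local Notation bmul := (bS_mul mul).

Definition filter_mul G p : set (set S) := [set A | G [set s | p (linv mul s A)]].

Lemma filter_mul_filter G p : is_filter G -> is_filter p -> is_filter (filter_mul G p).
Proof.
move=> GF pF; split.
- by apply: is_filterS GF _ (is_filterT GF) => s _; exact: is_filterT.
- by move=> /(is_filter_ex GF) [s /(is_filter_ex pF) []].
- move=> A B GA GB; apply: is_filterS GF _ (is_filterI GF GA GB) => s [].
  exact: is_filterI.
- move=> A B AB GA; apply: is_filterS GF _ GA => s.
  by apply: is_filterS pF _ => t /AB.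
Qed.

Lemma bS_mul_ultra p q : is_ultrafilter p -> is_ultrafilter q ->
  is_ultrafilter (bmul p q).
Proof.
move=> pU qU; split; first exact: filter_mul_filter pU.1 qU.1.
move=> A; have [|pCA] := pU.2 [set s | q (linv mul s A)]; first by left.
by right; apply: is_filterS pU.1 _ pCA => s /(ultra_setC _ qU).
Qed.

Lemma bS_mulA : (forall a b c, mul a (mul b c) = mul (mul a b) c) ->
  forall p q r, bmul p (bmul q r) = bmul (bmul p q) r.
Proof.
move=> mulA p q r; apply/funext => A; rewrite /bS_mul /linv /=.
congr (p _); apply/funext => s; congr (q _); apply/funext => t; congr (r _).
by apply/funext => v; rewrite /= mulA.
Qed.

Definition rdiv_base p r : set (set S) := [set [set s | p (linv mul s A)] | A in r].

Lemma rdiv_base_ne p r : is_filter r -> rdiv_base p r !=set0.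
Proof. by move=> rF; exists [set s | p (linv mul s setT)], setT => //; exact: is_filterT. Qed.

Lemma rdiv_base_directed p r : is_filter p -> is_filter r -> down_directed (rdiv_base p r).
Proof.
move=> pF rF _ _ [A1 rA1 <-] [A2 rA2 <-].
exists [set s | p (linv mul s (A1 `&` A2))].
  by exists (A1 `&` A2) => //; exact: is_filterI.
by move=> s ps; split; apply: is_filterS pF _ ps => t [].
Qed.

Lemma rdiv_baseP p q r : is_ultrafilter p -> is_ultrafilter q -> is_ultrafilter r ->
  rdiv_base p r `<=` q <-> bmul q p = r.
Proof.
move=> pU qU rU; split=> [rq|<- _ [A qpA <-] //].
by apply: ultra_max rU (bS_mul_ultra qU pU).1 _ => A rA; apply: rq; exists A.
Qed.

Lemma Fbar_filter_mul G p r : is_filter G -> is_ultrafilter p ->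
  Fbar (filter_mul G p) r <-> exists2 q, Fbar G q & bmul q p = r.
Proof.
move=> GF pU; split=> [[rU Gpr]|[q [qU Gq] <-]]; last first.
  by split=> [|A /Gq]; first exact: bS_mul_ultra.
have [|||q [Gq /(rdiv_baseP pU Gq.1 rU) qpr]] := @Fbar_gen_ex _ G (rdiv_base p r) GF.
- exact: rdiv_base_ne rU.1.
- exact: rdiv_base_directed pU.1 rU.1.
- move=> E _ GE [A rA <-]; apply/set0P/eqP => /disjoints_subset EpA.
  have /Gpr : filter_mul G p (~` A).
    by apply: is_filterS GF _ GE => s /EpA /(ultra_setC _ pU).
  by move/(ultra_setC _ rU).
by exists q.
Qed.

Definition subsemigroup K := forall p q, K p -> K q -> K (bmul p q).

Definition left_ideal L K := K `<=` L /\ forall q p, L q -> K p -> K (bmul q p).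

Lemma left_ideal_subsemigroup L K : left_ideal L K -> subsemigroup K.
Proof. by move=> [KL LK] p q /KL; apply: LK. Qed.

Lemma subsemigroup_bigcup (C : set (set (set S))) : C !=set0 ->
  (forall H, C H -> subsemigroup (Fbar H)) -> subsemigroup (Fbar (\bigcup_(H in C) H)).
Proof.
move=> C0 CS p q /(Fbar_bigcup _ C0) Cp /(Fbar_bigcup _ C0) Cq.
by apply/(Fbar_bigcup _ C0) => H CH; apply: CS _ CH _ _ (Cp _ CH) (Cq _ CH).
Qed.

Lemma left_ideal_bigcup L (C : set (set (set S))) : C !=set0 ->
  (forall H, C H -> left_ideal L (Fbar H)) -> left_ideal L (Fbar (\bigcup_(H in C) H)).
Proof.
move=> C0 CL; have [H0 CH0] := C0; split.
  by move=> p /(Fbar_bigcup _ C0) /(_ H0 CH0); apply: (CL _ CH0).1.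
move=> q p Lq /(Fbar_bigcup _ C0) Cp; apply/(Fbar_bigcup _ C0) => H CH.
by apply: (CL _ CH).2 _ _ Lq (Cp _ CH).
Qed.

Lemma F_syndetic_of_Fbar F A : is_filter F ->
  (forall C q, F C -> Fbar F q -> exists2 t, C t & q (linv mul t A)) ->
  F_syndetic mul F A.
Proof.
move=> FF FA C FC; apply: contrapT => nsyn.
pose Bs := [set ~` \bigcup_(t in D) linv mul t A | D in [set D | finite_set D /\ D `<=` C]].
have [|||q [Fq Bsq]] := @Fbar_gen_ex _ F Bs FF.
- exists (~` \bigcup_(t in set0) linv mul t A), set0 => //.
  by split; [exact: finite_set0|exact: sub0set].
- move=> _ _ [D1 [D1fin D1C] <-] [D2 [D2fin D2C] <-].
  exists (~` \bigcup_(t in D1 `|` D2) linv mul t A).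
    by exists (D1 `|` D2) => //; split; [rewrite finite_setU|by move=> t [/D1C|/D2C]].
  by rewrite bigcup_setU setCU.
- move=> E _ FE [D [Dfin DC] <-]; apply/set0P/eqP => /disjoints_subset; rewrite setCK => ED.
  by apply: nsyn; exists D; split=> //; apply: is_filterS FF ED FE.
have [t Ct qtA] := FA C q FC Fq.
have /(ultra_setC _ Fq.1) : q (~` \bigcup_(s in [set t]) linv mul s A).
  by apply: Bsq; exists [set t] => //; split; [exact: finite_set1|move=> _ ->].
by rewrite bigcup_set1.
Qed.

End StoneCech.

Section MinimalIdempotent.
Variables (S : Type) (mul : S -> S -> S).
Hypothesis mulA : forall a b c, mul a (mul b c) = mul (mul a b) c.
Implicit Types (F G H : set (set S)) (p q r u : set (set S)).
Local Notation bmul := (bS_mul mul).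
Local Notation closed_subsemigroup := (fun H => subsemigroup mul (Fbar H)).

Lemma minimal_subsemigroup_right_unit H p :
  minimal_Fbar closed_subsemigroup H -> Fbar H p -> exists2 q, Fbar H q & bmul q p = p.
Proof.
move=> [HF HS Hmin] Hp; have HpE r := Fbar_filter_mul mul r HF Hp.1.
have HpH : Fbar (filter_mul mul H p) `<=` Fbar H.
  by move=> _ /HpE [q Hq <-]; apply: HS.
suff /Hmin : closed_subsemigroup (filter_mul mul H p).
  by move=> /(_ (filter_mul_filter mul HF Hp.1.1) HpH _ Hp) /HpE.
move=> _ _ /HpE [q1 Hq1 <-] /HpE [q2 Hq2 <-]; rewrite (bS_mulA mulA); apply/HpE.
by exists (bmul (bmul q1 p) q2); first exact: HS _ _ (HS _ _ Hq1 Hp) Hq2.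
Qed.

Lemma minimal_subsemigroup_idem H p :
  minimal_Fbar closed_subsemigroup H -> Fbar H p -> bmul p p = p.
Proof.
move=> Hmin Hp; have [q Hq qp] := minimal_subsemigroup_right_unit Hmin Hp.
have [HF HS {}Hmin] := Hmin; have pU := Hp.1.
pose K := filter_gen H (rdiv_base mul p p).
have KE r : Fbar K r <-> Fbar H r /\ bmul r p = p.
  rewrite Fbar_filter_gen //; last exact: rdiv_base_ne pU.1.
  by split=> -[Hr ?]; split=> //; apply/(rdiv_baseP _ pU Hr.1 pU).
have KF : is_filter K.
  apply: filter_gen_filter => //; first exact: rdiv_base_ne pU.1.
    exact: rdiv_base_directed pU.1 pU.1.
  have /(rdiv_baseP _ pU Hq.1 pU) pq := qp.
  move=> E B HE /pq qB.
  exact: is_filter_ex Hq.1.1 (is_filterI Hq.1.1 (Hq.2 _ HE) qB).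
have KH : Fbar K `<=` Fbar H by move=> r /KE [].
suff /Hmin : closed_subsemigroup K by move=> /(_ KF KH _ Hp) /KE [].
move=> r1 r2 /KE [Hr1 r1p] /KE [Hr2 r2p]; apply/KE; split; first exact: HS.
by rewrite -(bS_mulA mulA) r2p.
Qed.

Lemma Ellis_Numakura H : is_filter H -> subsemigroup mul (Fbar H) ->
  exists2 p, Fbar H p & bmul p p = p.
Proof.
move=> HF HS; have [|H0 H0H H0min] := @minimal_Fbar_ex _ closed_subsemigroup H _ HF HS.
  by move=> C C0 CQ _; apply: subsemigroup_bigcup => // K /CQ [].
have [H0F _ _] := H0min; have [p H0p] := Fbar_ex H0F.
by exists p; [exact: H0H|exact: minimal_subsemigroup_idem H0min H0p].
Qed.

Variable F : set (set S).
Hypotheses (hF : is_filter F) (hFbar : Fbar_subsemigroup mul F).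
Local Notation closed_left_ideal := (fun H => left_ideal mul (Fbar F) (Fbar H)).

Lemma minimal_left_ideal_absorb G p u : minimal_Fbar closed_left_ideal G ->
  Fbar G p -> Fbar G u -> exists2 r, Fbar F r & bmul r p = u.
Proof.
move=> [GF [GsubF GL] Gmin] Gp Gu; have FpE r := Fbar_filter_mul mul r hF Gp.1.
have FpG : Fbar (filter_mul mul F p) `<=` Fbar G by move=> _ /FpE [r Fr <-]; exact: GL.
suff /Gmin : closed_left_ideal (filter_mul mul F p).
  by move=> /(_ (filter_mul_filter mul hF Gp.1.1) FpG _ Gu) /FpE.
split=> [r /FpG /GsubF //|q _ Fq /FpE [r Fr <-]].
rewrite (bS_mulA mulA); apply/FpE.
by exists (bmul q r) => //; exact: hFbar.2.
Qed.

Theorem minimal_idempotent_ex : exists u, [/\ Fbar F u, bmul u u = u &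
  forall q, Fbar F q -> exists2 r, Fbar F r & bmul r (bmul q u) = u].
Proof.
have [|||G0 _ G0min] := @minimal_Fbar_ex _ closed_left_ideal F.
- by move=> C C0 CQ _; apply: left_ideal_bigcup => // K /CQ [].
- exact: hF.
- by split=> //; exact: hFbar.2.
have [G0F G0L _] := G0min.
have [u G0u uu] := Ellis_Numakura G0F (left_ideal_subsemigroup G0L).
exists u; split=> // [|q Fq]; first exact: G0L.1.
exact: minimal_left_ideal_absorb G0min (G0L.2 _ _ Fq G0u) G0u.
Qed.
End MinimalIdempotent.

Section Dynamics.
Variables (S : Type) (mul : S -> S -> S) (X : topologicalType) (T : S -> X -> X).
Hypotheses (hcomp : compact [set: X]) (hhaus : hausdorff_space X).
Hypotheses (hcont : forall s, continuous (T s)) (hact : forall s t, T s \o T t = T (mul s t)).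
Implicit Types (F : set (set S)) (p q r u : set (set S)).
Local Notation bmul := (bS_mul mul).

Definition orbit_cvg p z (w : X) := T^~ z @ (p : set_system S) --> w.

Lemma orbit_cvg_ex p z : is_ultrafilter p -> exists w, orbit_cvg p z w.
Proof.
move=> pU; have pF := is_filter_proper pU.1.
have [w [_ wclust]] := hcomp _ (filterT : (T^~ z @ (p : set_system S)) setT).
exists w => W wW; apply: contrapT => /(ultra_setC _ pU) pCW.
by have [? []] := wclust (~` W) W pCW wW.
Qed.

Lemma orbit_cvg_unique p z w1 w2 : is_ultrafilter p ->
  orbit_cvg p z w1 -> orbit_cvg p z w2 -> w1 = w2.
Proof. by move=> /proj1 /is_filter_proper pF; exact: cvg_unique. Qed.

Lemma orbit_cvg_mul p q z w v : is_ultrafilter p -> is_ultrafilter q ->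
  orbit_cvg q z w -> orbit_cvg p w v -> orbit_cvg (bmul p q) z v.
Proof.
move=> pU qU qzw pwv W; rewrite nbhsE => -[O [Oopen Ov] OW].
apply: is_filterS pU.1 _ (pwv _ (open_nbhs_nbhs (conj Oopen Ov))) => s Osw.
have /hcont /qzw : nbhs (T s w) O by exact: open_nbhs_nbhs.
apply: is_filterS qU.1 _ => t /= Ostz.
by apply: OW; rewrite /= -hact.
Qed.

Lemma orbit_cvg_closure p z w B : is_filter p -> p B -> orbit_cvg p z w ->
  closure [set T s z | s in B] w.
Proof.
move=> pF pB pzw N wN; have [s [Nsz Bs]] := is_filter_ex pF (is_filterI pF (pzw _ wN) pB).
by exists (T s z); split=> //; exists s.
Qed.

Lemma orbit_cvg_idem u x y : is_ultrafilter u -> bmul u u = u ->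
  orbit_cvg u x y -> orbit_cvg u y y.
Proof.
move=> uU uu uxy; have [v uyv] := orbit_cvg_ex y uU.
have := orbit_cvg_mul uU uU uxy uyv; rewrite uu => uxv.
by rewrite (orbit_cvg_unique uU uxv uxy) in uyv.
Qed.

Lemma F_proximal_of_cvg F p x y w : is_filter p -> F `<=` p ->
  orbit_cvg p x w -> orbit_cvg p y w -> F_proximal T F x y.
Proof.
move=> pF Fp pxw pyw U [O [Oopen Odiag OU]] C FC.
have [[P1 P2] /= [wP1 wP2] PO] : nbhs (w, w) O by apply: open_nbhs_nbhs.
have pP := is_filterI pF (is_filterI pF (pxw _ wP1) (pyw _ wP2)) (Fp _ FC).
have [s [[P1x P2y] Cs]] := is_filter_ex pF pP.
by exists s => //; apply/OU/PO.
Qed.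

Lemma F_unif_recurrent_of_minimal F u y :
  (forall a b c, mul a (mul b c) = mul (mul a b) c) -> is_filter F -> Fbar F u ->
  (forall q, Fbar F q -> exists2 r, Fbar F r & bmul r (bmul q u) = u) ->
  orbit_cvg u y y -> F_unif_recurrent mul T F y.
Proof.
move=> mulA FF Fu umin uyy U yU; apply: F_syndetic_of_Fbar => // C q FC Fq.
have [r Fr rqu] := umin q Fq; have rqU := bS_mul_ultra mul Fr.1 Fq.1.
have [v rqyv] := orbit_cvg_ex y rqU.
have rqyy : orbit_cvg (bmul r q) y y.
  have := orbit_cvg_mul rqU Fu.1 uyy rqyv; rewrite -(bS_mulA mulA) rqu => uyv.
  by rewrite (orbit_cvg_unique Fu.1 uyv uyy) in rqyv.
have [t [qtU Ct]] := is_filter_ex Fr.1.1 (is_filterI Fr.1.1 (rqyy _ yU) (Fr.2 _ FC)).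
by exists t.
Qed.
End Dynamics.

Unset Implicit Arguments.
Theorem lemma12 (S : Type) (mul : S -> S -> S)
  (mulA : forall a b c, mul a (mul b c) = mul (mul a b) c)
  (F : set (set S)) (hF : is_filter F) (hFbar : Fbar_subsemigroup mul F)
  (X : topologicalType) (hcomp : compact [set: X]) (hhaus : hausdorff_space X)
  (T : S -> X -> X) (hcont : forall s, continuous (T s))
  (hact : forall s t, T s \o T t = T (mul s t))
  (x : X) :
  forall B, F B -> exists y : X,
    [/\ closure [set T s x | s in B] y,
        F_unif_recurrent mul T F y &
        F_proximal T F x y].
Proof.
move=> B FB.
have [u [Fu uu umin]] := minimal_idempotent_ex mulA hF hFbar.
have [y uxy] := orbit_cvg_ex T hcomp x Fu.1.
have uyy := orbit_cvg_idem hcomp hhaus hcont hact Fu.1 uu uxy.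
exists y; split.
- exact: orbit_cvg_closure Fu.1.1 (Fu.2 _ FB) uxy.
- exact: (F_unif_recurrent_of_minimal hcomp hhaus hcont hact mulA hF Fu umin uyy).
- exact: F_proximal_of_cvg Fu.1.1 Fu.2 uxy uyy.
Qed.
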